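(* For every $\vec n\in\mathbb{R}^9$ with $\sum_i n(i)=0$ and $\sum_i n(i)^2=1$, $$-\frac1{\sqrt2}\le F(\vec n)\le\frac1{\sqrt2}.$$ Moreover, writing the trace-one Hermitian operator $\rho=\sum_i[4p(i)-\frac13]\Pi_i$ with $p(i)=\frac19+r\,n(i)$, $r>0$, in terms of its eigenvalues $\alpha,\beta,1-\alpha-\beta$, one has $F(\vec n)=\dfrac{\sqrt3\left(\frac29-f_1+f_2\right)}{\left(f_1-\frac13\right)^{3/2}}$ with $f_1=\alpha^2+\beta^2+(1-\alpha-\beta)^2$, $f_2=\alpha^3+\beta^3+(1-\alpha-\beta)^3$; the upper bound is attained exactly when two eigenvalues are equal and less than $\frac13$, and the lower bound exactly when two eigenvalues are equal and greater than $\frac13$.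
   Context: Let $\omega=e^{2\pi i/3}$, standard basis $|0\rangle,|1\rangle,|2\rangle$ of $\mathbb{C}^3$, $X|j\rangle=|j+1\bmod 3\rangle$, $Z|j\rangle=\omega^j|j\rangle$, $|\psi_0\rangle=\frac1{\sqrt2}(0,1,-1)^T$; for $m,n\in\{0,1,2\}$ and $i=3m+n+1$, $\Pi_i$ is the projector onto $X^mZ^n|\psi_0\rangle$ (the canonical Hesse SIC). Identify index $i=3m+n+1$ with $(m,n)\in\mathbb{Z}_3^2$; the 12 affine lines are $\{1,2,3\},\{4,5,6\},\{7,8,9\},\{1,4,7\},\{2,5,8\},\{3,6,9\},\{1,5,9\},\{2,6,7\},\{3,4,8\},\{1,6,8\},\{2,4,9\},\{3,5,7\}$, and $Q$ is the set of ordered triples $(i,j,k)$ of pairwise distinct indices with $\{i,j,k\}$ a line. For $v\in\mathbb{R}^9$ define $F(v)=\sum_i v(i)^3-\frac12\sum_{(i,j,k)\in Q}v(i)v(j)v(k)$. *)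

(* Complex numbers: an arbitrary numClosedFieldType C
   (e.g. the complex numbers); reals are the elements x with x \is Num.real. *)
From HB Require Import structures.
From mathcomp Require Import all_boot all_order all_algebra.
Set Implicit Arguments. Unset Strict Implicit. Unset Printing Implicit Defensive.
Import Order.TTheory GRing.Theory Num.Theory.
Local Open Scope ring_scope.

Section Hesse.
Variable C : numClosedFieldType.

(* omega = e^{2 pi i/3} = -1/2 + i sqrt(3)/2 *)
Definition omega : C := (-1 + 'i * sqrtC 3) / 2.

Definition Xop : 'M[C]_3 :=
  \matrix_(k < 3, j < 3) (if (k : nat) == ((j + 1) %% 3)%N then 1 else 0).
Definition Zop : 'M[C]_3 :=
  \matrix_(k < 3, j < 3) (if k == j then omega ^+ j else 0).

Definition psi0 : 'cV[C]_3 :=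
  \col_(k < 3) ((if (k : nat) == 1%N then 1 else if (k : nat) == 2%N then -1 else 0)
                 / sqrtC 2).

(* index i = 3m+n (0-based, i.e. the paper's 3m+n+1 minus one) *)
Definition sic_vec (i : 'I_9) : 'cV[C]_3 :=
  (Xop ^+ (i %/ 3)%N) *m (Zop ^+ (i %% 3)%N) *m psi0.

Definition Pi (i : 'I_9) : 'M[C]_3 :=
  sic_vec i *m (map_mx Num.conj (sic_vec i))^T.

End Hesse.

(* The 12 affine lines, 0-based (paper index minus one). *)
Definition lines : seq {set 'I_9} :=
  [:: [set inord 0; inord 1; inord 2]; [set inord 3; inord 4; inord 5];
      [set inord 6; inord 7; inord 8]; [set inord 0; inord 3; inord 6];
      [set inord 1; inord 4; inord 7]; [set inord 2; inord 5; inord 8];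
      [set inord 0; inord 4; inord 8]; [set inord 1; inord 5; inord 6];
      [set inord 2; inord 3; inord 7]; [set inord 0; inord 5; inord 7];
      [set inord 1; inord 3; inord 8]; [set inord 2; inord 4; inord 6]].

Definition inQ (i j k : 'I_9) : bool :=
  [&& i != j, j != k, i != k & [set i; j; k] \in lines].

Definition Ffun (C : numClosedFieldType) (v : 'I_9 -> C) : C :=
  \sum_(i < 9) v i ^+ 3
  - 2^-1 * \sum_(i < 9) \sum_(j < 9) \sum_(k < 9)
              (if inQ i j k then v i * v j * v k else 0).

Definition pvec (C : numClosedFieldType) (r : C) (n : 'I_9 -> C) (i : 'I_9) : C :=
  9^-1 + r * n i.

Definition rho (C : numClosedFieldType) (r : C) (n : 'I_9 -> C) : 'M[C]_3 :=
  \sum_(i < 9) (4 * pvec r n i - 3^-1) *: Pi C i.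

Definition f1 (C : numClosedFieldType) (a b : C) : C :=
  a ^+ 2 + b ^+ 2 + (1 - a - b) ^+ 2.
Definition f2 (C : numClosedFieldType) (a b : C) : C :=
  a ^+ 3 + b ^+ 3 + (1 - a - b) ^+ 3.

Definition two_equal_with (C : numClosedFieldType) (P : C -> bool) (a b c : C) : Prop :=
  (a = b /\ P a) \/ (a = c /\ P a) \/ (b = c /\ P b).

From HB Require Import structures.
From mathcomp Require Import all_boot all_order all_algebra.
From mathcomp Require Import ring zify.
Set Implicit Arguments. Unset Strict Implicit. Unset Printing Implicit Defensive.
Import Order.TTheory GRing.Theory Num.Theory.
Local Open Scope ring_scope.

(* Since sum_i Pi_i = 3 I (the Hesse SIC is a tight frame), the operator of the
   statement decomposes as  rho = I/3 + 4 r N  with  N = sum_i n(i) Pi_i.  Writing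
   x, y, z for the eigenvalues of rho shifted by -1/3, i.e. the eigenvalues of
   4 r N, Newton's identities for a 3x3 matrix give their power sums as traces:
       x + y + z = 4r tr N,   x^2 + y^2 + z^2 = 16 r^2 tr N^2,
       x^3 + y^3 + z^3 = 64 r^3 tr N^3.
   An explicit (Fourier-type) formula for the entries of N, valid modulo
   w^2 + w + 1 = 0, yields tr N = sum n, tr N^2 = (3 sum n^2 + (sum n)^2)/4
   and, when sum n = 0, tr N^3 = 3/8 F(n); the cubic F is computed from the
   affine lines of Z_3^2.  Hence x + y + z = 0, x^2 + y^2 + z^2 = 12 r^2 and
   x^3 + y^3 + z^3 = 24 r^3 F(n).  The eigenvalues are real because rho is
   self-adjoint, and the discriminant identity
       (x^2 + y^2 + z^2)^3 - 6 (x^3 + y^3 + z^3)^2 = 2 ((x-y)(x-z)(y-z))^2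
   shows F(n)^2 <= 1/2, with equality iff two eigenvalues coincide; the sign of
   F(n) is then that of -(common value), which locates it relative to 1/3. *)

Section SICVectors.
Variable C : numClosedFieldType.
Local Notation w := (omega C).

Lemma omega_sq : w ^+ 2 = - 1 - w.
Proof.
have hi : ('i : C) ^+ 2 = -1 by rewrite sqrCi.
have h3 : sqrtC (3 : C) ^+ 2 = 3 by rewrite sqrtCK.
by rewrite /omega; field: hi h3.
Qed.

Lemma conj_omega : w^* = w ^+ 2.
Proof.
rewrite omega_sq /omega fmorph_div rmorphD rmorphN rmorph1 rmorphM /= conjCi.
by rewrite (CrealP (sqrtC_real _)) ?ler0n // conjC_nat; field.
Qed.

Definition psi_coord (j : nat) : C :=
  if j == 1%N then 1 else if j == 2%N then -1 else 0.

Definition shift3 (m k : nat) : nat := ((k + 3 - m) %% 3)%N.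

Lemma sic_vec_entry (i : 'I_9) (k : 'I_3) :
  sic_vec C i k 0 =
  (sqrtC 2)^-1 * psi_coord (shift3 (i %/ 3) k) * w ^+ ((i %% 3) * shift3 (i %/ 3) k).
Proof.
case: i => [[|[|[|[|[|[|[|[|[|//]]]]]]]]]] Hi; case: k => [[|[|[|//]]]] Hk;
rewrite /sic_vec /shift3 /= ?expr0 ?expr1 ?expr2 -?mulmxE ?mul1mx /Xop /Zop /psi0 /psi_coord.
all: do ?(rewrite -?mulmxE !mxE ?big_ord_recr ?big_ord0 /=).
all: ring.
Qed.

Lemma conj_sic_vec_entry (i : 'I_9) (k : 'I_3) :
  (sic_vec C i k 0)^* =
  (sqrtC 2)^-1 * psi_coord (shift3 (i %/ 3) k) * (w ^+ 2) ^+ ((i %% 3) * shift3 (i %/ 3) k).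
Proof.
have s2r : (sqrtC (2 : C))^-1 \is Num.real by rewrite realV sqrtC_real ?ler0n.
have psir j : psi_coord j \is Num.real.
  by rewrite /psi_coord; do 2?case: ifP => _; rewrite ?rpredN ?real1 ?real0.
by rewrite sic_vec_entry !rmorphM rmorphXn /= conj_omega (CrealP s2r) (CrealP (psir _)).
Qed.

Lemma Pi_entry (i : 'I_9) (k l : 'I_3) :
  Pi C i k l = 2^-1 * psi_coord (shift3 (i %/ 3) k) * psi_coord (shift3 (i %/ 3) l)
   * w ^+ ((i %% 3) * shift3 (i %/ 3) k) * (w ^+ 2) ^+ ((i %% 3) * shift3 (i %/ 3) l).
Proof.
have h2 : (sqrtC (2 : C))^-1 * (sqrtC 2)^-1 = 2^-1 by rewrite -invfM -expr2 sqrtCK.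
rewrite /Pi mxE big_ord1 [X in _ * X]mxE [X in _ * X]mxE.
by rewrite sic_vec_entry conj_sic_vec_entry -h2; ring.
Qed.
End SICVectors.

(* [ring]/[field] cannot see through the definition of omega: abstract it and
   supply the relation w^2 = -1 - w as a rewriting rule. *)
Ltac field_omega C :=
  let w := fresh "w" in let hw := fresh "hw" in
  move: (omega_sq C); generalize (omega C) => w hw; field: hw.

Definition lines_nat : seq (seq nat) :=
  [:: [:: 0; 1; 2]; [:: 3; 4; 5]; [:: 6; 7; 8]; [:: 0; 3; 6]; [:: 1; 4; 7]; [:: 2; 5; 8];
      [:: 0; 4; 8]; [:: 1; 5; 6]; [:: 2; 3; 7]; [:: 0; 5; 7]; [:: 1; 3; 8]; [:: 2; 4; 6]]%N.

Definition on_line (i j k : nat) : bool :=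
  [&& i != j, j != k, i != k & has (fun L => [&& i \in L, j \in L & k \in L]) lines_nat].

Lemma set3_eq (T : finType) (i j k a b c : T) : i != j -> j != k -> i != k ->
  ([set i; j; k] == [set a; b; c]) =
  [&& i \in [set a; b; c], j \in [set a; b; c] & k \in [set a; b; c]].
Proof.
move=> hij hjk hik; rewrite eqEcard !subUset !sub1set -!andbA.
have -> : #|[set i; j; k]| = 3%N.
  by rewrite setUC cardsU1 cards2 !inE hij eq_sym (negbTE hik) eq_sym (negbTE hjk).
have -> : (#|[set a; b; c]| <= 3)%N.
  by apply: (leq_trans (leq_card_setU _ _).1); rewrite cards2 cards1; case: (a != b).
by rewrite andbT.
Qed.

Lemma inQ_on_line (i j k : 'I_9) : inQ i j k = on_line i j k.
Proof.
rewrite /inQ /on_line -!val_eqE /=.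
have [<-|hij] := eqVneq (val i) (val j); first by [].
have [<-|hjk] := eqVneq (val j) (val k); first by rewrite !andbF.
have [<-|hik] := eqVneq (val i) (val k); first by rewrite !andbF.
rewrite /lines !inE !set3_eq -?val_eqE // !inE -!val_eqE /= !inordK //.
by rewrite !orbA ?orbF; reflexivity.
Qed.

(* The third point of the line through two distinct points p, q of Z_3^2 is
   -(p + q), computed coordinatewise on the index 3m + n. *)
Definition third (i j : nat) : nat :=
  3 * ((6 - i %/ 3 - j %/ 3) %% 3) + (6 - i %% 3 - j %% 3) %% 3.

Lemma third_lt9 (i j : nat) : (third i j < 9)%N.
Proof.
rewrite /third; have := ltn_pmod (6 - i %/ 3 - j %/ 3) (isT : (0 < 3)%N).
have := ltn_pmod (6 - i %% 3 - j %% 3) (isT : (0 < 3)%N); lia.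
Qed.

Lemma on_line_third (i j k : nat) : (i < 9)%N -> (j < 9)%N -> (k < 9)%N ->
  on_line i j k = (i != j) && (k == third i j).
Proof.
have table : all (fun i => all (fun j => all (fun k =>
   on_line i j k == (i != j) && (k == third i j)) (iota 0 9)) (iota 0 9)) (iota 0 9).
  by vm_compute.
move=> hi hj hk; apply/eqP.
by move/allP: table => /(_ i); rewrite mem_iota => /(_ hi)/allP/(_ j);
  rewrite mem_iota => /(_ hj)/allP/(_ k); rewrite mem_iota; apply.
Qed.

Definition coords (C : numClosedFieldType) (v : 'I_9 -> C) (i : nat) : C := v (inord i).

Lemma coordsE (C : numClosedFieldType) (v : 'I_9 -> C) (i : 'I_9) : v i = coords v i.
Proof. by rewrite /coords inord_val. Qed.

Lemma sum_on_line (C : numClosedFieldType) (f : nat -> C) (i j : nat) :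
  (i < 9)%N -> (j < 9)%N ->
  \sum_(k < 9) (if on_line i j k then f k else 0) = if i != j then f (third i j) else 0.
Proof.
move=> hi hj; under eq_bigr => k _ do rewrite on_line_third //.
case: (i != j); last by rewrite big1.
rewrite (bigD1 (inord (third i j))) //= inordK ?third_lt9 // eqxx big1 ?addr0 // => k.
by rewrite -val_eqE /= inordK ?third_lt9 // => /negbTE ->.
Qed.

(* The Hesse cubic: each of the 12 lines contributes its 3! orderings to Q. *)
Definition hesse_cubic (C : numClosedFieldType) (v : nat -> C) : C :=
  \sum_(i < 9) v i ^+ 3 - 3 * \sum_(L <- lines_nat) \prod_(a <- L) v a.

Lemma Ffun_coords (C : numClosedFieldType) (n : 'I_9 -> C) : Ffun n = hesse_cubic (coords n).
Proof.
have inner (i j : 'I_9) : \sum_(k < 9) (if inQ i j k then n i * n j * n k else 0) =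
    if (i : nat) != j then coords n i * coords n j * coords n (third i j) else 0.
  rewrite -(sum_on_line (fun k => coords n i * coords n j * coords n k)) //.
  by apply: eq_bigr => k _; rewrite inQ_on_line !(coordsE n).
rewrite /Ffun /hesse_cubic (eq_bigr _ (fun i _ => eq_bigr _ (fun j _ => inner i j))).
rewrite !big_ord_recr !big_ord0 /= !big_cons !big_nil /= !(coordsE n).
by field.
Qed.

Section HesseOperator.
Variable C : numClosedFieldType.
Local Notation w := (omega C).
Implicit Type v : 'I_9 -> C.

Definition hesseN v : 'M[C]_3 := \sum_(i < 9) v i *: Pi C i.

(* Entries of N: a diagonal entry is half the weight off row k of Z_3^2; the
   (k, l) entry, k != l, is minus half the Fourier coefficient of the
   remaining row m = 3 - k - l at frequency k - l. *)
Definition hesse_entry (v : nat -> C) (k l : nat) : C :=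
  if k == l then 2^-1 * (\sum_(i < 9) v i - \sum_(j < 3) v (3 * k + j)%N)
  else - 2^-1 * \sum_(j < 3) v (3 * (3 - k - l) + j)%N * w ^+ (j * (k + 3 - l)).

Lemma hesseN_entry v (k l : 'I_3) : hesseN v k l = hesse_entry (coords v) k l.
Proof.
rewrite /hesseN /hesse_entry summxE.
under eq_bigr => i _ do rewrite mxE Pi_entry (coordsE v i).
case: k => [[|[|[|//]]]] Hk; case: l => [[|[|[|//]]]] Hl;
  rewrite /= !big_ord_recr !big_ord0 /= /psi_coord /shift3 /=.
all: by field_omega C.
Qed.

Lemma sum_Pi : \sum_(i < 9) Pi C i = 3%:M.
Proof.
have -> : \sum_(i < 9) Pi C i = hesseN (fun _ => 1).
  by apply: eq_bigr => i _; rewrite scale1r.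
apply/matrixP => k l; rewrite hesseN_entry /hesse_entry /coords mxE.
case: k => [[|[|[|//]]]] Hk; case: l => [[|[|[|//]]]] Hl; rewrite /= !big_ord_recr !big_ord0 /=.
all: by field_omega C.
Qed.

Lemma rho_decomp (r : C) (n : 'I_9 -> C) : rho r n = 3^-1%:M + (4 * r) *: hesseN n.
Proof.
have split_coef i :
    (4 * pvec r n i - 3^-1) *: Pi C i = 9^-1 *: Pi C i + (4 * r) *: (n i *: Pi C i).
  by rewrite scalerA -scalerDl /pvec; congr (_ *: _); field.
rewrite /rho (eq_bigr _ (fun i _ => split_coef i)) big_split /= -!scaler_sumr sum_Pi.
by rewrite scale_scalar_mx; congr (_%:M + _); field.
Qed.
End HesseOperator.

Lemma mxtrace_sq (R : pzSemiRingType) (m : nat) (A : 'M[R]_m.+1) :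
  \tr (A ^+ 2) = \sum_k \sum_l A k l * A l k.
Proof. by rewrite /mxtrace; apply: eq_bigr => k _; rewrite expr2 -mulmxE mxE. Qed.

Lemma mxtrace_cube (R : pzSemiRingType) (m : nat) (A : 'M[R]_m.+1) :
  \tr (A ^+ 3) = \sum_k \sum_l \sum_j A k l * A l j * A j k.
Proof.
rewrite /mxtrace; apply: eq_bigr => k _; rewrite exprS expr2 -!mulmxE mxE.
by apply: eq_bigr => l _; rewrite mxE big_distrr; apply: eq_bigr => j _; exact: mulrA.
Qed.

Section HesseTraces.
Variable C : numClosedFieldType.
Implicit Type v : 'I_9 -> C.

Lemma hesse_trace1 v : \tr (hesseN v) = \sum_i v i.
Proof.
rewrite /mxtrace !big_ord_recr !big_ord0 !hesseN_entry /hesse_entry /=.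
by rewrite !big_ord_recr !big_ord0 /= !(coordsE v); field.
Qed.

Lemma hesse_trace2 v : \tr (hesseN v ^+ 2) = 4^-1 * (3 * \sum_i v i ^+ 2 + (\sum_i v i) ^+ 2).
Proof.
rewrite mxtrace_sq !big_ord_recr !big_ord0 !hesseN_entry /hesse_entry /=.
by rewrite !big_ord_recr !big_ord0 /= !(coordsE v); field_omega C.
Qed.

Lemma hesse_trace3 v : \sum_i v i = 0 -> \tr (hesseN v ^+ 3) = 8^-1 * (3 * Ffun v).
Proof.
rewrite Ffun_coords /hesse_cubic !big_ord_recr !big_ord0 /= !(coordsE v) => hsum.
have h8 : coords v 8 = - (coords v 0 + coords v 1 + coords v 2 + coords v 3
   + coords v 4 + coords v 5 + coords v 6 + coords v 7).
  by apply/eqP; rewrite -subr_eq0 -hsum; apply/eqP; ring.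
rewrite mxtrace_cube !big_ord_recr !big_ord0 !hesseN_entry /hesse_entry /=.
rewrite !big_ord_recr !big_ord0 /= !big_cons !big_nil.
by move: (omega_sq C); generalize (omega C) => w hw; field: hw h8.
Qed.
End HesseTraces.

Lemma char_poly_horner (R : comNzRingType) (m : nat) (A : 'M[R]_m) (t : R) :
  (char_poly A).[t] = \det (t%:M - A).
Proof.
rewrite /char_poly -horner_evalE -det_map_mx; congr (\det _).
apply/matrixP => i j; rewrite !mxE /= horner_evalE.
by rewrite hornerD hornerN hornerMn hornerX hornerC.
Qed.

Section ThreeByThree.
Variable R : comNzRingType.
Implicit Type A : 'M[R]_3.

(* Entries with natural-number indices, so that expanded sums over 'I_3 can be
   compared syntactically. *)
Definition entry A (k l : nat) : R := A (inord k) (inord l).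
Local Notation "A `_( k , l )" := (entry A k l) (at level 3, format "A `_( k ,  l )").

Lemma entryE A (i j : 'I_3) : A i j = A`_(i, j).
Proof. by rewrite /entry !inord_val. Qed.

Lemma det_mx33 A : \det A =
    A`_(0, 0) * A`_(1, 1) * A`_(2, 2) + A`_(0, 1) * A`_(1, 2) * A`_(2, 0)
  + A`_(0, 2) * A`_(1, 0) * A`_(2, 1) - A`_(0, 2) * A`_(1, 1) * A`_(2, 0)
  - A`_(0, 0) * A`_(1, 2) * A`_(2, 1) - A`_(0, 1) * A`_(1, 0) * A`_(2, 2).
Proof.
rewrite (expand_det_row _ ord0) !big_ord_recr big_ord0 /cofactor /=.
rewrite !(expand_det_row _ ord0) !big_ord_recr !big_ord0 /cofactor /= !det_mx11 !mxE.
by rewrite !(entryE A); ring.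
Qed.

Lemma entry_scalar_sub A (t : R) (k l : nat) : (k < 3)%N -> (l < 3)%N ->
  (t%:M - A)`_(k, l) = (if k == l then t else 0) - A`_(k, l).
Proof.
move=> hk hl; rewrite /entry !mxE -val_eqE /= !inordK //.
by case: (k == l); rewrite ?mulr1n ?mulr0n.
Qed.
End ThreeByThree.

Lemma power_sums3 (F : numFieldType) (A : 'M[F]_3) (a b c : F) :
  (forall t, \det (t%:M - A) = (t - a) * (t - b) * (t - c)) ->
  [/\ a + b + c = \tr A, a ^+ 2 + b ^+ 2 + c ^+ 2 = \tr (A ^+ 2)
    & a ^+ 3 + b ^+ 3 + c ^+ 3 = \tr (A ^+ 3)].
Proof.
move=> hdet.
(* The elementary symmetric functions, read off at t = 0, 1, -1. *)
have e1 : a + b + c = (0 - a) * (0 - b) * (0 - c)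
    - ((1 - a) * (1 - b) * (1 - c) + (-1 - a) * (-1 - b) * (-1 - c)) / 2 by field.
have e2 : a * b + b * c + c * a =
    ((1 - a) * (1 - b) * (1 - c) - (-1 - a) * (-1 - b) * (-1 - c)) / 2 - 1 by field.
have e3 : a * b * c = - ((0 - a) * (0 - b) * (0 - c)) by ring.
have -> : a ^+ 2 + b ^+ 2 + c ^+ 2 = (a + b + c) ^+ 2 - 2 * (a * b + b * c + c * a) by ring.
have -> : a ^+ 3 + b ^+ 3 + c ^+ 3 = (a + b + c) ^+ 3
    - 3 * (a + b + c) * (a * b + b * c + c * a) + 3 * (a * b * c) by ring.
rewrite e1 e2 e3 -!hdet !det_mx33 !entry_scalar_sub // mxtrace_sq mxtrace_cube /mxtrace.
rewrite !big_ord_recr !big_ord0 /= !(entryE A) /=.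
by split; field.
Qed.

Section SelfAdjoint.
Variable C : numClosedFieldType.

Definition selfadjoint (m : nat) (A : 'M[C]_m) : Prop := forall k l, (A k l)^* = A l k.

Lemma outer_selfadjoint (m : nat) (u : 'cV[C]_m) : selfadjoint (u *m (map_mx Num.conj u)^T).
Proof. by move=> k l; rewrite !mxE !big_ord1 !mxE rmorphM /= conjCK mulrC. Qed.

Lemma selfadjoint_real_comb (m p : nat) (c : 'I_p -> C) (A : 'I_p -> 'M[C]_m) :
  (forall i, c i \is Num.real) -> (forall i, selfadjoint (A i)) ->
  selfadjoint (\sum_i c i *: A i).
Proof.
move=> cr hA k l; rewrite !summxE rmorph_sum /=; apply: eq_bigr => i _.
by rewrite !mxE rmorphM /= (CrealP (cr i)) hA.
Qed.

(* Rayleigh quotient argument: u A u^dagger = a |u|^2 is real. *)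
Lemma selfadjoint_eigen_real (m : nat) (A : 'M[C]_m) (a : C) :
  selfadjoint A -> root (char_poly A) a -> a \is Num.real.
Proof.
move=> hA; rewrite -eigenvalue_root_char => /eigenvalueP [u hu unz].
pose s := \sum_l u 0 l * (u 0 l)^*.
pose q := \sum_l \sum_k u 0 k * A k l * (u 0 l)^*.
have qE : q = a * s.
  rewrite /q /s mulr_sumr; apply: eq_bigr => l _; rewrite -mulr_suml.
  have : (u *m A) 0 l = (a *: u) 0 l by rewrite hu.
  by rewrite !mxE => ->; rewrite mulrA.
have q_real : q^* = q.
  rewrite rmorph_sum /=; under eq_bigr => l _ do rewrite rmorph_sum /=.
  rewrite exchange_big /=; apply: eq_bigr => l _; apply: eq_bigr => k _.
  by rewrite !rmorphM /= conjCK hA; ring.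
have s_ge0 : 0 <= s by apply: sumr_ge0 => l _; exact: mul_conjC_ge0.
have s_gt0 : 0 < s.
  rewrite lt_def s_ge0 andbT; apply: contra unz => /eqP s0; apply/eqP/rowP => l.
  have /eqP := psumr_eq0P (fun l _ => mul_conjC_ge0 (u 0 l)) s0 (i := l) isT.
  by rewrite mul_conjC_eq0 !mxE => /eqP.
have -> : a = q / s by rewrite qE mulfK ?gt_eqF.
have q_re : q \is Num.real by apply/CrealP.
by rewrite rpredM // rpredV gtr0_real.
Qed.
End SelfAdjoint.

Lemma cubic_discriminant (R : comPzRingType) (x y z : R) : x + y + z = 0 ->
  (x ^+ 2 + y ^+ 2 + z ^+ 2) ^+ 3 - 6 * (x ^+ 3 + y ^+ 3 + z ^+ 3) ^+ 2
  = 2 * ((x - y) * (x - z) * (y - z)) ^+ 2.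
Proof.
move=> hs; have -> : z = - x - y by apply/eqP; rewrite -(subr_eq0 z) -hs; apply/eqP; ring.
by ring.
Qed.

Section Extremes.
Variable C : numClosedFieldType.
Local Notation u := ((sqrtC (2 : C))^-1).

Lemma sqrt_half_sq : u ^+ 2 = 2^-1.
Proof. by rewrite exprVn sqrtCK. Qed.

Lemma sqrt_half_gt0 : 0 < u.
Proof. by rewrite invr_gt0 sqrtC_gt0 ltr0n. Qed.

Lemma real_sq_le_half (F : C) : F \is Num.real -> F ^+ 2 <= 2^-1 -> - u <= F <= u.
Proof.
move=> Fr h; rewrite -real_ler_norml // -(ler_sqr (normr_ge0 F) (ltW sqrt_half_gt0)).
by rewrite real_normK // sqrt_half_sq.
Qed.

Lemma real_eq_sqrt_half (F : C) : F \is Num.real -> (F = u <-> F ^+ 2 = 2^-1 /\ 0 < F).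
Proof.
move=> Fr; split=> [->|[F2 Fp]]; first by rewrite sqrt_half_sq sqrt_half_gt0.
apply/eqP; rewrite -(eqrXn2 (isT : (0 < 2)%N)) ?ltW ?sqrt_half_gt0 //.
by rewrite F2 sqrt_half_sq.
Qed.

(* If x + y + z = 0 and two of them equal t, the sum of cubes is -6 t^3; so
   "two equal, with common value in P" amounts to a vanishing discriminant
   together with a condition on the sum of cubes. *)
Lemma two_equal_with_cube (P Q : C -> bool) (x y z : C) :
  x \is Num.real -> y \is Num.real -> z \is Num.real -> x + y + z = 0 ->
  {in Num.real, forall t, P t = Q (- 6 * t ^+ 3)} ->
  two_equal_with P x y z <->
  (x - y) * (x - z) * (y - z) = 0 /\ Q (x ^+ 3 + y ^+ 3 + z ^+ 3).
Proof.
move=> xr yr zr hs hPQ.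
have pair (p q t : C) : p + q + t = 0 -> p = q -> p ^+ 3 + q ^+ 3 + t ^+ 3 = - 6 * p ^+ 3.
  move=> h e; have -> : t = - (p + q) by apply/eqP; rewrite -subr_eq0 -h; apply/eqP; ring.
  by rewrite -e; ring.
have cxy : x = y -> x ^+ 3 + y ^+ 3 + z ^+ 3 = - 6 * x ^+ 3 by exact: pair.
have cxz : x = z -> x ^+ 3 + y ^+ 3 + z ^+ 3 = - 6 * x ^+ 3.
  by move=> e; rewrite -(pair x z y) // -?hs; ring.
have cyz : y = z -> x ^+ 3 + y ^+ 3 + z ^+ 3 = - 6 * y ^+ 3.
  by move=> e; rewrite -(pair y z x) // -?hs; ring.
split.
- case=> [[e hP]|[[e hP]|[e hP]]]; (split; first by rewrite e; ring).
  + by rewrite (cxy e) -hPQ.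
  + by rewrite (cxz e) -hPQ.
  + by rewrite (cyz e) -hPQ.
- case=> /eqP; rewrite !mulf_eq0 !subr_eq0 => /orP[/orP[]|] /eqP e hQ.
  + by left; split=> //; rewrite hPQ // -(cxy e).
  + by right; left; split=> //; rewrite hPQ // -(cxz e).
  + by right; right; split=> //; rewrite hPQ // -(cyz e).
Qed.

Lemma two_equal_with_shift (P Q : C -> bool) (s a b c : C) :
  (forall t, P t = Q (t - s)) ->
  two_equal_with P a b c <-> two_equal_with Q (a - s) (b - s) (c - s).
Proof.
move=> hPQ; have shift (p q : C) : p - s = q - s <-> p = q by split=> [/addIr|->].
rewrite /two_equal_with !shift -!hPQ; reflexivity.
Qed.

(* With x + y + z = 0 and x^2 + y^2 + z^2 = 12 r^2, the value F defined by
   x^3 + y^3 + z^3 = 24 r^3 F satisfies 1/2 - F^2 = disc^2 / (1728 r^6). *)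
Lemma cubic_form_extremes (F r x y z : C) : 0 < r ->
  x \is Num.real -> y \is Num.real -> z \is Num.real -> x + y + z = 0 ->
  x ^+ 2 + y ^+ 2 + z ^+ 2 = 12 * r ^+ 2 -> x ^+ 3 + y ^+ 3 + z ^+ 3 = 24 * r ^+ 3 * F ->
  [/\ F \is Num.real, F ^+ 2 <= 2^-1,
     F = u <-> two_equal_with (fun t => t < 0) x y z &
     F = - u <-> two_equal_with (fun t => 0 < t) x y z].
Proof.
move=> r_gt0 xr yr zr hs h2 h3.
have [S Sdef] : {S | S = x ^+ 3 + y ^+ 3 + z ^+ 3} by eexists.
have [D Ddef] : {D | D = (x - y) * (x - z) * (y - z)} by eexists.
rewrite -Sdef in h3.
have r_neq0 : r != 0 by rewrite gt_eqF.
have FE : F = S / (24 * r ^+ 3) by rewrite h3; field.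
have r3_gt0 : 0 < 24 * r ^+ 3 by rewrite mulr_gt0 ?ltr0n ?exprn_gt0.
have Sr : S \is Num.real.
  by rewrite Sdef; exact: rpredD (rpredD (rpredX 3 xr) (rpredX 3 yr)) (rpredX 3 zr).
have Fr : F \is Num.real by rewrite FE (rpredM Sr) // rpredV gtr0_real.
have Dr : D \is Num.real.
  by rewrite Ddef; exact: rpredM (rpredM (rpredB xr yr) (rpredB xr zr)) (rpredB yr zr).
have hd : 2^-1 - F ^+ 2 = D ^+ 2 / (1728 * r ^+ 6).
  have D2 : D ^+ 2 = ((12 * r ^+ 2) ^+ 3 - 6 * S ^+ 2) / 2.
    by rewrite Sdef Ddef -h2 cubic_discriminant //; field.
  by rewrite D2 FE; field.
have F2_le : F ^+ 2 <= 2^-1.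
  rewrite -subr_ge0 hd divr_ge0 // ?real_exprn_even_ge0 //.
  by rewrite mulr_ge0 ?ler0n ?exprn_ge0 ?ltW.
have F2_eq : F ^+ 2 = 2^-1 <-> D = 0.
  have nz : 1728 * r ^+ 6 != 0 by rewrite mulf_eq0 pnatr_eq0 expf_eq0 (negbTE r_neq0) andbF.
  split=> [h|D0]; last by apply/eqP; rewrite -subr_eq0 -oppr_eq0 opprB hd D0 expr0n mul0r.
  have /eqP : D ^+ 2 / (1728 * r ^+ 6) = 0 by rewrite -hd h subrr.
  by rewrite mulf_eq0 invr_eq0 (negbTE nz) orbF sqrf_eq0 => /eqP.
have F_gt0 : (0 < F) = (0 < S) by rewrite FE pmulr_lgt0 // invr_gt0.
have F_lt0 : (F < 0) = (S < 0) by rewrite FE pmulr_llt0 // invr_gt0.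
split=> //.
- rewrite real_eq_sqrt_half // F2_eq F_gt0 Sdef Ddef.
  apply: iff_sym; apply: two_equal_with_cube => // t tr.
  by rewrite mulNr oppr_gt0 pmulr_rlt0 ?ltr0n // real_exprn_odd_lt0.
- apply: (@iff_trans _ (- F = u)); first by split=> [->|<-]; rewrite opprK.
  rewrite real_eq_sqrt_half ?rpredN // sqrrN F2_eq oppr_gt0 F_lt0 Sdef Ddef.
  apply: iff_sym; apply: (two_equal_with_cube (Q := fun s => s < 0)) => // t tr.
  by rewrite mulNr oppr_lt0 pmulr_rgt0 ?ltr0n // real_exprn_odd_gt0.
Qed.
End Extremes.

Section Moments.
Variable C : numClosedFieldType.
Variable n : 'I_9 -> C.
Hypothesis n_real : forall i, n i \is Num.real.
Hypothesis n_sum : \sum_(i < 9) n i = 0.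
Hypothesis n_sq : \sum_(i < 9) n i ^+ 2 = 1.

Lemma rho_selfadjoint (r : C) : r \is Num.real -> selfadjoint (rho r n).
Proof.
move=> rr; apply: selfadjoint_real_comb => [i|i]; last exact: outer_selfadjoint.
by rewrite /pvec ?(realB, realM, realD, realV, real1, realn) // n_real.
Qed.

Lemma rho_eigen_real (r a b c : C) : r \is Num.real ->
  char_poly (rho r n) = ('X - a%:P) * ('X - b%:P) * ('X - c%:P) ->
  [/\ a - 3^-1 \is Num.real, b - 3^-1 \is Num.real & c - 3^-1 \is Num.real].
Proof.
move=> rr hchar.
have eig x : root (char_poly (rho r n)) x -> x - 3^-1 \is Num.real.
  move/(selfadjoint_eigen_real (rho_selfadjoint rr)) => xr.
  by rewrite realB // realV realn.
by split; apply: eig; rewrite hchar /root !hornerM !hornerXsubC subrr ?mulr0 ?mul0r.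
Qed.

Lemma rho_moments (r a b c : C) :
  char_poly (rho r n) = ('X - a%:P) * ('X - b%:P) * ('X - c%:P) ->
  [/\ (a - 3^-1) + (b - 3^-1) + (c - 3^-1) = 0,
      (a - 3^-1) ^+ 2 + (b - 3^-1) ^+ 2 + (c - 3^-1) ^+ 2 = 12 * r ^+ 2 &
      (a - 3^-1) ^+ 3 + (b - 3^-1) ^+ 3 + (c - 3^-1) ^+ 3 = 24 * r ^+ 3 * Ffun n].
Proof.
move=> hchar.
(* The shifted eigenvalues are those of rho - I/3 = 4 r N. *)
have hdet t : \det (t%:M - (4 * r) *: hesseN n) =
    (t - (a - 3^-1)) * (t - (b - 3^-1)) * (t - (c - 3^-1)).
  have -> : t%:M - (4 * r) *: hesseN n = (t + 3^-1)%:M - rho r n.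
    by rewrite rho_decomp raddfD /= opprD addrA addrK.
  rewrite -char_poly_horner hchar !hornerM !hornerXsubC; ring.
have [p1 p2 p3] := power_sums3 hdet.
rewrite p1 p2 p3 !exprZn !mxtraceZ hesse_trace1 hesse_trace2 hesse_trace3 // n_sum n_sq.
by split; field.
Qed.
End Moments.

Theorem mainTheorem8 (C : numClosedFieldType) (n : 'I_9 -> C)
  (hreal : forall i, n i \is Num.real)
  (hsum : \sum_(i < 9) n i = 0)
  (hsq : \sum_(i < 9) n i ^+ 2 = 1) :
  (- (sqrtC 2)^-1 <= Ffun n /\ Ffun n <= (sqrtC 2)^-1) /\
  (forall (r a b : C), 0 < r ->
     char_poly (rho r n) = ('X - a%:P) * ('X - b%:P) * ('X - (1 - a - b)%:P) ->
     [/\ Ffun n = sqrtC 3 * (2 / 9 - f1 a b + f2 a b) / (sqrtC (f1 a b - 3^-1)) ^+ 3,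
         Ffun n = (sqrtC 2)^-1 <-> two_equal_with (fun x => x < 3^-1) a b (1 - a - b)
       & Ffun n = - (sqrtC 2)^-1 <-> two_equal_with (fun x => x > 3^-1) a b (1 - a - b)]).
Proof.
split.
- (* The bounds: split the characteristic polynomial of rho for r = 1. *)
  have [abc habc] := closed_field_poly_normal (char_poly (rho 1 n)).
  rewrite (monicP (char_poly_monic _)) scale1r in habc.
  have := size_char_poly (rho 1 n); rewrite habc size_prod_XsubC.
  case: abc habc => [|a [|b [|c [|? ?]]]] //= habc _.
  rewrite !big_cons big_nil mulr1 mulrA in habc.
  have [ar br cr] := rho_eigen_real hreal (real1 C) habc.
  have [s1 s2 s3] := rho_moments hsum hsq habc.
  have [Fr F2 _ _] := cubic_form_extremes ltr01 ar br cr s1 s2 s3.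
  by apply/andP; exact: real_sq_le_half.
- move=> r a b r_gt0 hchar.
  have [ar br cr] := rho_eigen_real hreal (gtr0_real r_gt0) hchar.
  have [s1 s2 s3] := rho_moments hsum hsq hchar.
  have [_ _ hmax hmin] := cubic_form_extremes r_gt0 ar br cr s1 s2 s3.
  split.
  +
    have hf1 : f1 a b - 3^-1 = 12 * r ^+ 2 by rewrite -s2 /f1; field.
    have hf2 : 2 / 9 - f1 a b + f2 a b = 24 * r ^+ 3 * Ffun n by rewrite -s3 /f1 /f2; field.
    have s3_sq : sqrtC (3 : C) ^+ 2 = 3 by rewrite sqrtCK.
    have s3_neq0 : sqrtC (3 : C) != 0 by rewrite sqrtC_eq0 pnatr_eq0.
    have r_neq0 : r != 0 by rewrite gt_eqF.
    have -> : sqrtC (f1 a b - 3^-1) = 2 * sqrtC 3 * r.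
      rewrite hf1 (_ : 12 * r ^+ 2 = (2 * sqrtC 3 * r) ^+ 2); last by rewrite !exprMn s3_sq; ring.
      by rewrite sqrCK // !mulr_ge0 ?ler0n ?sqrtC_ge0 ?ltW.
    rewrite hf2 (_ : (2 * sqrtC 3 * r) ^+ 3 = 8 * sqrtC 3 * sqrtC 3 ^+ 2 * r ^+ 3); last by ring.
    by rewrite s3_sq; field; rewrite r_neq0 s3_neq0.
  + rewrite hmax; apply: iff_sym; apply: two_equal_with_shift => t.
    by rewrite subr_lt0.
  + rewrite hmin; apply: iff_sym; apply: two_equal_with_shift => t.
    by rewrite subr_gt0.
Qed.
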